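(* Let $\mathbf{R}$ be a real closed field, $\mathbf{C}=\mathbf{R}(\sqrt{-1})$, and let $(\mathcal{A},* )$ be a $(\mathbf{C},* )$-algebra. Let $n$ be a positive integer and equip $M_n(\mathcal{A})$ with the involution $(a_{ij})^*=(a_{ji}^* )$. Then $(\mathcal{A},* )$ is real reduced if and only if $(M_n(\mathcal{A}),* )$ is real reduced.
   Context: A $*$-ring is an associative unital ring with an involution $*$ satisfying $(a+b)^*=a^*+b^*$, $(ab)^*=b^*a^*$, $(a^* )^*=a$. The field $\mathbf{C}$ carries the conjugation involution over $\mathbf{R}$ ($\sqrt{-1}\mapsto-\sqrt{-1}$). A $(\mathbf{C},* )$-algebra is a $*$-ring $(\mathcal{A},* )$ together with a $*$-homomorphism $\mathbf{C}\to\mathcal{A}$ whose image lies in the center of $\mathcal{A}$. A $*$-ring $(\mathcal{A},* )$ is real reduced if for any finitely many $a_1,\dots,a_k\in\mathcal{A}$, $\sum_i a_i^*a_i=0$ implies $a_i=0$ for all $i$. *)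

From HB Require Import structures.
From mathcomp Require Import all_boot all_order all_algebra.
From mathcomp Require Import complex.
Set Implicit Arguments. Unset Strict Implicit. Unset Printing Implicit Defensive.
Import Order.TTheory GRing.Theory Num.Theory.
Local Open Scope ring_scope.

Definition is_star_ring (A : pzRingType) (s : A -> A) : Prop :=
  (forall a b : A, s (a + b) = s a + s b) /\
  (forall a b : A, s (a * b) = s b * s a) /\
  (forall a : A, s (s a) = a).

Definition is_C_star_algebra (R : rcfType) (A : pzRingType) (s : A -> A)
  (phi : {rmorphism R[i] -> A}) : Prop :=
  is_star_ring s /\
  (forall z : R[i], phi (conjc z) = s (phi z)) /\
  (forall (z : R[i]) (a : A), phi z * a = a * phi z).

Definition real_reduced (T : nmodType) (mul : T -> T -> T) (s : T -> T) : Prop :=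
  forall (k : nat) (a : 'I_k -> T),
    \sum_(i < k) mul (s (a i)) (a i) = 0 -> forall i, a i = 0.

Definition mx_star (A : pzRingType) (s : A -> A) (n : nat) (M : 'M[A]_n) : 'M[A]_n :=
  \matrix_(i, j) s (M j i).

(* For a matrix M over A, the diagonal entry (M^* M)_qq is the sum of the
   hermitian squares s(M_pq) M_pq, so a vanishing sum of hermitian squares of
   matrices yields, in each column q, a vanishing sum of hermitian squares in A
   indexed by pairs (j, p).  Conversely, the corner embedding a |-> a E_00 is
   additive, multiplicative, injective and commutes with the involutions, so it
   transports real reducedness of M_n(A) back to A. *)

From mathcomp Require Import all_boot all_order all_algebra.
From mathcomp Require Import complex.
Set Implicit Arguments. Unset Strict Implicit. Unset Printing Implicit Defensive.
Local Open Scope ring_scope.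
Import GRing.Theory.

Lemma real_reduced_fin (T : nmodType) (mul : T -> T -> T) (s : T -> T)
    (I : finType) (a : I -> T) :
  real_reduced mul s -> \sum_(i : I) mul (s (a i)) (a i) = 0 ->
  forall i, a i = 0.
Proof.
move=> rrT sum_a0 i.
have sum_enum0 : \sum_(j < #|I|) mul (s (a (enum_val j))) (a (enum_val j)) = 0.
  rewrite -[RHS]sum_a0 [RHS](reindex (@enum_val I (mem predT))) //=.
  by exists enum_rank => x _; rewrite ?enum_valK ?enum_rankK.
by rewrite -(enum_rankK i); apply: rrT sum_enum0 _.
Qed.

Section MatrixStar.

Variables (A : pzRingType) (s : A -> A).

Lemma mx_star_mul_diag n (M : 'M[A]_n) q :
  (mx_star s M *m M) q q = \sum_p s (M p q) * M p q.
Proof. by rewrite mxE; apply: eq_bigr => p _; rewrite mxE. Qed.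

Lemma real_reduced_mx n :
  real_reduced ( *%R : A -> A -> A) s ->
  real_reduced (@mulmx A n n n) (@mx_star A s n).
Proof.
move=> rrA k M sumM0 i; apply/matrixP => p q; rewrite mxE.
have sum_col0 : \sum_(x : 'I_k * 'I_n) s (M x.1 x.2 q) * M x.1 x.2 q = 0.
  move/matrixP/(_ q q): sumM0; rewrite summxE mxE => sum_diag0.
  rewrite -[RHS]sum_diag0.
  by rewrite [RHS](eq_bigr _ (fun j _ => mx_star_mul_diag (M j) q)) pair_bigA.
exact: (real_reduced_fin rrA sum_col0 (i, p)).
Qed.

Section Corner.

Variables (n : nat) (o : 'I_n).

Definition corner_mx (a : A) : 'M[A]_n :=
  \matrix_(p, q) if (p == o) && (q == o) then a else 0.

Lemma corner_mx_inj : injective corner_mx.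
Proof.
by move=> a b /(congr1 (fun X : 'M[A]_n => X o o)); rewrite !mxE eqxx.
Qed.

Lemma corner_mx0 : corner_mx 0 = 0.
Proof. by apply/matrixP => p q; rewrite !mxE; case: ifP. Qed.

Lemma corner_mx_sum (I : finType) (a : I -> A) :
  \sum_i corner_mx (a i) = corner_mx (\sum_i a i).
Proof.
apply/matrixP => p q; rewrite summxE !mxE.
under eq_bigr do rewrite mxE.
by case: ifP => _; rewrite ?big1_eq.
Qed.

Lemma mul_corner_mx a b : corner_mx a *m corner_mx b = corner_mx (a * b).
Proof.
apply/matrixP => p q; rewrite !mxE (bigD1 o) //= big1 => [|l /negPf l_neq_o].
- rewrite !mxE eqxx andbT addr0.
  by case: (p == o); case: (q == o); rewrite ?mulr0 ?mul0r.
- by rewrite !mxE l_neq_o andbF mulr0.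
Qed.

Lemma mx_star_corner a : s 0 = 0 -> mx_star s (corner_mx a) = corner_mx (s a).
Proof.
by move=> s0; apply/matrixP => p q; rewrite !mxE andbC; case: ifP.
Qed.

End Corner.

Lemma real_reduced_of_mx n : (0 < n)%N -> s 0 = 0 ->
  real_reduced (@mulmx A n n n) (@mx_star A s n) ->
  real_reduced ( *%R : A -> A -> A) s.
Proof.
move=> n_gt0 s0 rrM k a sum_a0 i; pose o := Ordinal n_gt0.
apply: (corner_mx_inj (o := o)).
have sum_corner0 :
    \sum_(j < k) mx_star s (corner_mx o (a j)) *m corner_mx o (a j) = 0.
  under eq_bigr do rewrite mx_star_corner // mul_corner_mx.
  by rewrite corner_mx_sum sum_a0 corner_mx0.
by rewrite (rrM k _ sum_corner0 i) corner_mx0.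
Qed.

End MatrixStar.

Lemma additive_fun0 (V : zmodType) (f : V -> V) :
  (forall a b, f (a + b) = f a + f b) -> f 0 = 0.
Proof. by move=> fD; apply: (addrI (f 0)); rewrite -fD !addr0. Qed.

Theorem lemma7 (R : rcfType) (A : pzRingType) (s : A -> A)
  (phi : {rmorphism R[i] -> A}) (n : nat) :
  is_C_star_algebra s phi -> (0 < n)%N ->
  (real_reduced ( *%R : A -> A -> A) s <->
   real_reduced (@mulmx A n n n) (@mx_star A s n)).
Proof.
move=> [[sD _] _] n_gt0; split; first exact: real_reduced_mx.
exact: real_reduced_of_mx n_gt0 (additive_fun0 sD).
Qed.
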